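(* Let $d \geq 2$, $n \geq 1$, $\varphi(t) = \frac12 t^2$ and $w_{ij} = 1$ for all $i,j$. If $X \in \mathcal{M}$ is a critical point of $f(X) = \frac14\|X^\top X\|_F^2$ at which the Riemannian Hessian is negative semidefinite, then $\mathrm{rank}(X) < d$.
   Context: $\mathcal{M} = (\mathbb{S}^{d-1})^n$ is the set of $X \in \mathbb{R}^{d\times n}$ with unit-norm columns $x_1,\dots,x_n$, a Riemannian submanifold of $\mathbb{R}^{d\times n}$ with the Frobenius metric; gradient and Hessian are Riemannian. *)

(* Oblique manifold M = (S^{d-1})^n as a Riemannian submanifold
   of R^{d x n} (Frobenius metric). *)
From HB Require Import structures.
From mathcomp Require Import all_boot all_order all_algebra.
From mathcomp Require Import reals.
Set Implicit Arguments. Unset Strict Implicit. Unset Printing Implicit Defensive.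
Import Order.TTheory GRing.Theory Num.Theory.
Local Open Scope ring_scope.

Definition frob (R : realType) (p q : nat) (A B : 'M[R]_(p, q)) : R :=
  \sum_(i < p) \sum_(j < q) A i j * B i j.

Section Oblique.
Variables (R : realType) (d n : nat).
Implicit Types X V Z : 'M[R]_(d, n).


Definition on_manifold X : Prop := forall j : 'I_n, \sum_(i < d) X i j ^+ 2 = 1.

Definition tangent X V : Prop := forall j : 'I_n, \sum_(i < d) X i j * V i j = 0.

Definition proj X Z : 'M[R]_(d, n) :=
  \matrix_(i < d, j < n) (Z i j - (\sum_(k < d) X k j * Z k j) * X i j).

(* cost f(X) = 1/4 ||X^T X||_F^2, i.e. sum_{ij} w_ij phi(<x_i,x_j>) / 2 with
   phi(t) = t^2/2, w_ij = 1 *)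
Definition cost X : R := 4^-1 * frob (X^T *m X) (X^T *m X).

Definition egrad X : 'M[R]_(d, n) := X *m X^T *m X.
Definition ehess X V : 'M[R]_(d, n) :=
  V *m (X^T *m X) + X *m (V^T *m X) + X *m (X^T *m V).

Definition rgrad X : 'M[R]_(d, n) := proj X (egrad X).

(* Riemannian Hessian on the product of spheres (Riemannian submanifold):
   Hess f(X)[V] = Proj_X(D^2 f(X)[V]) - V diag(<x_j, (grad f(X))_j>) *)
Definition rhess X V : 'M[R]_(d, n) :=
  proj X (ehess X V) -
  \matrix_(i < d, j < n) (V i j * \sum_(k < d) X k j * egrad X k j).

Definition rhess_nsd X : Prop :=
  forall V, tangent X V -> frob V (rhess X V) <= 0.

End Oblique.

From HB Require Import structures.
From mathcomp Require Import all_boot all_order all_algebra.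
From mathcomp Require Import reals.
From mathcomp Require Import ring lra.
Import Order.TTheory GRing.Theory Num.Theory.
Local Open Scope ring_scope.
Set Implicit Arguments. Unset Strict Implicit. Unset Printing Implicit Defensive.

(* Let [G = X^T X] and [lambda_j = <x_j, (X G)_j>].  At a critical point
   [X G = X diag(lambda)], so [G^2 = G diag(lambda)].  Moving only column [j]
   in the tangent direction [x_k - G_jk x_j] gives the Hessian quadratic form
   [1 - G_jk^2 - lambda_j + lambda_k]; adding the same for the pair [(k, j)]
   shows that negative semidefiniteness forces [G_jk^2 >= 1], i.e. [x_k] is
   the multiple [G_jk x_j] of [x_j].  So [X] has rank at most [1 < d]. *)

Lemma sum_sqr_subZ (K : comPzRingType) m (a b : 'I_m -> K) c :
  \sum_(l < m) (a l - c * b l) ^+ 2 =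
  \sum_(l < m) a l ^+ 2 - c *+ 2 * \sum_(l < m) a l * b l
    + c ^+ 2 * \sum_(l < m) b l ^+ 2.
Proof.
rewrite !mulr_sumr -sumrB -big_split /=; apply: eq_bigr => l _; ring.
Qed.

Lemma rank_le1_col_multiples (F : fieldType) m p (M : 'M[F]_(m, p.+1))
    (c : 'I_p.+1 -> F) :
  (forall i k, M i k = c k * M i 0) -> (\rank M <= 1)%N.
Proof.
move=> Mc; have -> : M = col 0 M *m \row_k c k.
  by apply/matrixP => i k; rewrite !mxE big_ord1 !mxE Mc mulrC.
exact: mulmx_max_rank.
Qed.

Section Oblique.
Variables (R : realType) (d n : nat) (X : 'M[R]_(d, n)).

Local Notation G := (X^T *m X).

Definition lagrange_mult (j : 'I_n) : R := \sum_(k < d) X k j * egrad X k j.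
Local Notation lam := lagrange_mult.

Lemma gramE a b : G a b = \sum_(i < d) X i a * X i b.
Proof. by rewrite mxE; apply: eq_bigr => i _; rewrite mxE. Qed.

Lemma gramC a b : G a b = G b a.
Proof. by rewrite !gramE; apply: eq_bigr => i _; rewrite mulrC. Qed.

Lemma gram_diag j : on_manifold X -> G j j = 1.
Proof. by move=> /(_ j) <-; rewrite gramE; apply: eq_bigr => i _; rewrite expr2. Qed.

Lemma sum_gram_mul k j :
  \sum_(l < n) G l k * G l j = \sum_(i < d) X i k * egrad X i j.
Proof.
have /matrixP/(_ k j) : G *m G = X^T *m egrad X by rewrite /egrad !mulmxA.
rewrite !mxE (eq_bigr (fun i => X i k * egrad X i j)) => [<-|i _]; last by rewrite mxE.
by apply: eq_bigr => l _; rewrite gramC.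
Qed.

Lemma sum_gram_sqr j : \sum_(l < n) G l j ^+ 2 = lam j.
Proof. by rewrite /lagrange_mult -sum_gram_mul; apply: eq_bigr => l _; rewrite expr2. Qed.

Lemma critical_egrad : rgrad X = 0 -> forall i j, egrad X i j = lam j * X i j.
Proof.
move=> /matrixP crit i j; have := crit i j.
by rewrite !mxE => /eqP; rewrite subr_eq0 => /eqP.
Qed.

Lemma critical_sum_gram_mul k j : rgrad X = 0 ->
  \sum_(l < n) G l k * G l j = lam j * G k j.
Proof.
move=> crit; rewrite sum_gram_mul gramE mulr_sumr.
by apply: eq_bigr => i _; rewrite critical_egrad // mulrCA.
Qed.

Lemma rhessE V i j : rhess X V i j =
  ehess X V i j - (\sum_(k < d) X k j * ehess X V k j) * X i j - V i j * lam j.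
Proof. by rewrite /rhess /proj; move: (ehess X V) => E; rewrite !mxE. Qed.

Lemma ehessE V i j : ehess X V i j =
  (V *m G) i j + (X *m (V^T *m X)) i j + (X *m (X^T *m V)) i j.
Proof. by rewrite /ehess; move: (V *m _) (X *m _) (X *m _) => A B C; rewrite !mxE. Qed.

Definition single_col (j : 'I_n) (v : 'I_d -> R) : 'M[R]_(d, n) :=
  \matrix_(i, l) (v i * (l == j)%:R).

Lemma frob_single_col j v M :
  frob (single_col j v) M = \sum_(i < d) v i * M i j.
Proof.
apply: eq_bigr => i _; rewrite (bigD1 j) //= mxE eqxx mulr1 big1 ?addr0 //.
by move=> l /negbTE lj; rewrite mxE lj mulr0 mul0r.
Qed.

Lemma single_col_mul j v p (M : 'M[R]_(n, p)) i l :
  (single_col j v *m M) i l = v i * M j l.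
Proof.
rewrite mxE (bigD1 j) //= mxE eqxx mulr1 big1 ?addr0 //.
by move=> k /negbTE kj; rewrite mxE kj mulr0 mul0r.
Qed.

Lemma trmx_single_col_mul j v p (M : 'M[R]_(d, p)) l m :
  ((single_col j v)^T *m M) l m = (l == j)%:R * \sum_(i < d) v i * M i m.
Proof.
rewrite mxE mulr_sumr; apply: eq_bigr => i _; rewrite !mxE; ring.
Qed.

Lemma trmx_mul_single_col j v p (M : 'M[R]_(d, p)) l :
  (M^T *m single_col j v) l j = \sum_(i < d) M i l * v i.
Proof. by rewrite mxE; apply: eq_bigr => i _; rewrite !mxE eqxx mulr1. Qed.

Lemma tangent_single_col j v :
  \sum_(i < d) X i j * v i = 0 -> tangent X (single_col j v).
Proof.
move=> vj l; have [->|/negbTE lj] := eqVneq l j.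
  by rewrite -[RHS]vj; apply: eq_bigr => i _; rewrite mxE eqxx mulr1.
by rewrite big1 // => i _; rewrite mxE lj !mulr0.
Qed.

Lemma rhess_single_col j v : on_manifold X ->
  \sum_(i < d) X i j * v i = 0 ->
  frob (single_col j v) (rhess X (single_col j v))
  = (1 - lam j) * \sum_(i < d) v i ^+ 2
    + \sum_(l < n) (\sum_(m < d) X m l * v m) ^+ 2.
Proof.
move=> onX vj; set V := single_col j v; set c := fun l => \sum_(m < d) X m l * v m.
have ehess_col i : ehess X V i j = v i + \sum_(l < n) X i l * c l.
  rewrite ehessE single_col_mul gram_diag // mulr1 -addrA; congr (_ + _).
  rewrite !mxE [X in X + _](bigD1 j) //= big1 => [|l /negbTE lj].
    rewrite trmx_single_col_mul eqxx mul1r.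
    rewrite (eq_bigr (fun m => X m j * v m)) => [|m _]; last exact: mulrC.
    by rewrite vj !mulr0 !add0r; apply: eq_bigr => l _; rewrite trmx_mul_single_col.
  by rewrite trmx_single_col_mul lj mul0r mulr0.
transitivity (\sum_(i < d) ((1 - lam j) * v i ^+ 2 + v i * \sum_(l < n) X i l * c l)
    - (\sum_(k < d) X k j * ehess X V k j) * \sum_(i < d) X i j * v i).
  rewrite frob_single_col mulr_sumr -sumrB; apply: eq_bigr => i _.
  rewrite rhessE ehess_col mxE eqxx mulr1; ring.
rewrite vj mulr0 subr0 big_split /= -mulr_sumr; congr (_ + _).
under eq_bigr => i _ do rewrite mulr_sumr.
rewrite exchange_big /=; apply: eq_bigr => l _.
by rewrite expr2 mulr_suml; apply: eq_bigr => i _; rewrite mulrCA mulrA.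
Qed.

Lemma sum_sqr_col_sub j k : on_manifold X ->
  \sum_(i < d) (X i k - G j k * X i j) ^+ 2 = 1 - G j k ^+ 2.
Proof. by move=> onX; rewrite sum_sqr_subZ !onX -gramE gramC; ring. Qed.

Section CriticalNSD.
Hypotheses (onX : on_manifold X) (crit : rgrad X = 0) (nsd : rhess_nsd X).

Lemma nsd_col_bound j k : 1 - G j k ^+ 2 - lam j + lam k <= 0.
Proof.
pose v i := X i k - G j k * X i j.
have colv l : \sum_(m < d) X m l * v m = G l k - G j k * G l j.
  rewrite (gramE l k) (gramE l j) mulr_sumr -sumrB.
  by apply: eq_bigr => m _; rewrite /v; ring.
have vj : \sum_(i < d) X i j * v i = 0.
  by rewrite colv gram_diag // gramC mulr1 subrr.
have := nsd (tangent_single_col vj); rewrite rhess_single_col //.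
rewrite (eq_bigr (fun l => (G l k - G j k * G l j) ^+ 2)) => [|l _]; last by rewrite colv.
rewrite sum_sqr_col_sub // sum_sqr_subZ !sum_gram_sqr critical_sum_gram_mul //.
by rewrite [G k j]gramC; congr (_ <= _); ring.
Qed.

Lemma critical_nsd_col_multiple j k i : X i k = G j k * X i j.
Proof.
have sqr_nneg m : 0 <= (X m k - G j k * X m j) ^+ 2 by exact: sqr_ge0.
have sum0 : \sum_(m < d) (X m k - G j k * X m j) ^+ 2 = 0.
  apply/eqP; rewrite eq_le sumr_ge0 // andbT sum_sqr_col_sub //.
  by have := nsd_col_bound j k; have := nsd_col_bound k j; rewrite [G k j]gramC; lra.
have /eqP := psumr_eq0P (fun m _ => sqr_nneg m) sum0 (i := i) isT.
by rewrite sqrf_eq0 subr_eq0 => /eqP.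
Qed.

End CriticalNSD.
End Oblique.

Theorem mainTheorem18 (R : realType) (d n : nat) (X : 'M[R]_(d, n)) :
  (2 <= d)%N -> (1 <= n)%N ->
  on_manifold X ->
  rgrad X = 0 ->
  rhess_nsd X ->
  (\rank X < d)%N.
Proof.
move=> d_ge2; case: n X => [//|p] X _ onX crit nsd.
apply: (@leq_ltn_trans 1%N) => //.
apply: (rank_le1_col_multiples (c := fun k => (X^T *m X) 0 k)) => i k.
exact: critical_nsd_col_multiple.
Qed.
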